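(* The LP randomized mechanism has approximation ratio at most $n$ for (integrally) scheduling any number of tasks to $n$ machines without money.
   Context: Scheduling without payments: $n$ machines, $m$ (indivisible) tasks; machine $i$ has private true times $t_{i,j}\ge0$ and declares $\hat t_{i,j}\ge0$. A randomized mechanism outputs a random integral allocation $A$ ($A_{i,j}\in\{0,1\}$, each task to exactly one machine) with marginals $a_{i,j}(\hat{\mathbf t})=\Pr[A_{i,j}=1]$. Machines are bound by their declarations: machine $i$ executes an assigned task $j$ for time $\max\{\hat t_{i,j},t_{i,j}\}$; her cost is $C_i(\hat{\mathbf t})=\sum_j a_{i,j}\max\{\hat t_{i,j},t_{i,j}\}$ and the makespan is $\mathbb E[\max_i\sum_jA_{i,j}\max\{\hat t_{i,j},t_{i,j}\}]$. A mechanism is truthful if for every $\mathbf t$, $i$, $\hat{\mathbf t}$: $C_i(\mathbf t_i,\hat{\mathbf t}_{-i})\le C_i(\hat{\mathbf t})$. Its approximation ratio is the supremum over instances $\mathbf t$ of the makespan under truthful reports divided by the optimal integral makespan $\min_A\max_i\sum_jA_{i,j}t_{i,j}$. The LP randomized mechanism, on declarations $\hat{\mathbf t}$, computes an optimal solution $\alpha(\hat{\mathbf t})$ (selected by a fixed rule among optimal solutions) of the linear program: minimize $\mu$ subject to $\sum_i\alpha_{i,j}=1$ for all $j$, $\mu-\sum_j\alpha_{i,j}\hat t_{i,j}\ge0$ for all $i$, $\alpha_{i,j}\ge0$; and assigns each task $j$ to machine $i$ with probability $\alpha_{i,j}(\hat{\mathbf t})$ (i.e.\ $a_{i,j}=\alpha_{i,j}$).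 *)

From mathcomp Require Import all_boot all_order all_algebra.
Set Implicit Arguments. Unset Strict Implicit. Unset Printing Implicit Defensive.
Import Order.TTheory GRing.Theory Num.Theory.
Local Open Scope ring_scope.

(* n machines ('I_n), m tasks ('I_m). Times: t i j = time of machine i on task j. *)

Definition alloc (n m : nat) := {ffun 'I_m -> 'I_n}.

(* Execution time of task j on machine i when the machine declared th and has
   true times t (machines are bound by their declarations). *)
Definition exec_time (R : realFieldType) (n m : nat)
  (th t : 'I_n -> 'I_m -> R) (i : 'I_n) (j : 'I_m) : R :=
  Num.max (th i j) (t i j).

Definition makespan (R : realFieldType) (n m : nat)
  (s : 'I_n -> 'I_m -> R) (A : alloc n m) : R :=
  \big[Num.max/0]_(i < n) \sum_(j < m | A j == i) s i j.

Definition is_opt_makespan (R : realFieldType) (n m : nat)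
  (t : 'I_n -> 'I_m -> R) (OPT : R) : Prop :=
  (exists A : alloc n m, makespan t A = OPT) /\
  (forall A : alloc n m, OPT <= makespan t A).

Definition lp_feasible (R : realFieldType) (n m : nat)
  (th : 'I_n -> 'I_m -> R) (alpha : 'I_n -> 'I_m -> R) (mu : R) : Prop :=
  [/\ forall i j, 0 <= alpha i j,
      forall j, \sum_(i < n) alpha i j = 1 &
      forall i, mu - \sum_(j < m) alpha i j * th i j >= 0].

Definition lp_optimal (R : realFieldType) (n m : nat)
  (th : 'I_n -> 'I_m -> R) (alpha : 'I_n -> 'I_m -> R) : Prop :=
  exists mu, lp_feasible th alpha mu /\
    (forall alpha' mu', lp_feasible th alpha' mu' -> mu <= mu').

Definition is_distr (R : realFieldType) (n m : nat)
  (p : {ffun alloc n m -> R}) : Prop :=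
  (forall A, 0 <= p A) /\ \sum_(A : alloc n m) p A = 1.

Definition has_marginals (R : realFieldType) (n m : nat)
  (p : {ffun alloc n m -> R}) (a : 'I_n -> 'I_m -> R) : Prop :=
  forall i j, \sum_(A : alloc n m | A j == i) p A = a i j.

Definition exp_makespan (R : realFieldType) (n m : nat)
  (p : {ffun alloc n m -> R}) (th t : 'I_n -> 'I_m -> R) : R :=
  \sum_(A : alloc n m) p A * makespan (exec_time th t) A.

From mathcomp Require Import all_boot all_order all_algebra.
Import Order.TTheory GRing.Theory Num.Theory.
Local Open Scope ring_scope.

(* The makespan of an allocation is at most its total load, whose expectation
   under marginals alpha is the LP load sum_i sum_j alpha_ij t_ij <= n mu.
   Every integral allocation is an LP solution whose value is its makespan,
   so the LP optimum mu is at most OPT. *)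

Section Allocations.

Context {R : realFieldType} {n m : nat}.
Implicit Types (s : 'I_n -> 'I_m -> R) (A : alloc n m).

Definition alloc_indicator A : 'I_n -> 'I_m -> R := fun i j => (A j == i)%:R.

Lemma load_indicatorE s A i :
  \sum_(j < m | A j == i) s i j = \sum_(j < m) alloc_indicator A i j * s i j.
Proof.
rewrite big_mkcond; apply: eq_bigr => j _.
by rewrite /alloc_indicator; case: (A j == i); rewrite ?mul1r ?mul0r.
Qed.

Lemma makespan_truthful s A : makespan (exec_time s s) A = makespan s A.
Proof.
by apply: eq_bigr => i _; apply: eq_bigr => j _; rewrite /exec_time maxxx.
Qed.

Lemma makespan_le_total_load s A : (forall i j, 0 <= s i j) ->
  makespan s A <= \sum_(i < n) \sum_(j < m) alloc_indicator A i j * s i j.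
Proof.
move=> s_ge0; under eq_bigr => k _ do rewrite -load_indicatorE.
have load_ge0 k : 0 <= \sum_(j < m | A j == k) s k j by apply: sumr_ge0.
apply: bigmax_le => [|i _]; first exact: sumr_ge0.
by rewrite (bigD1 i) //= lerDl; apply: sumr_ge0.
Qed.

Lemma expected_total_load {p : {ffun alloc n m -> R}} {a} s :
  has_marginals p a ->
  \sum_A p A * \sum_(i < n) \sum_(j < m) alloc_indicator A i j * s i j
  = \sum_(i < n) \sum_(j < m) a i j * s i j.
Proof.
move=> marg; under eq_bigr => A _ do rewrite big_distrr /=.
rewrite exchange_big; apply: eq_bigr => i _ /=.
under eq_bigr => A _ do rewrite big_distrr /=.
rewrite exchange_big; apply: eq_bigr => j _ /=.
rewrite -marg big_distrl /= [RHS]big_mkcond; apply: eq_bigr => A _.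
by rewrite /alloc_indicator; case: (A j == i); rewrite ?mul1r ?mul0r ?mulr0.
Qed.

Lemma lp_feasible_indicator s A :
  lp_feasible s (alloc_indicator A) (makespan s A).
Proof.
split=> [i j | j | i]; first by rewrite ler0n.
  rewrite (bigD1 (A j)) //= /alloc_indicator eqxx big1 ?addr0 // => i.
  by rewrite eq_sym => /negbTE ->.
by rewrite subr_ge0 -load_indicatorE; apply: le_bigmax.
Qed.

Lemma lp_total_load_le {s a mu} : lp_feasible s a mu ->
  \sum_(i < n) \sum_(j < m) a i j * s i j <= n%:R * mu.
Proof.
case=> _ _ load_le_mu; rewrite mulr_natl -[n in mu *+ n]card_ord -sumr_const.
by apply: ler_sum => i _; rewrite -subr_ge0.
Qed.

End Allocations.

Theorem theorem6 (R : realFieldType) (n m : nat) (t : 'I_n -> 'I_m -> R)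
  (alpha : 'I_n -> 'I_m -> R) (p : {ffun alloc n m -> R}) (OPT : R) :
  (0 < n)%N ->
  (forall i j, 0 <= t i j) ->
  lp_optimal t alpha ->
  is_distr p ->
  has_marginals p alpha ->
  is_opt_makespan t OPT ->
  exp_makespan p t t <= n%:R * OPT.
Proof.
move=> _ t_ge0 [mu [feas mu_min]] [p_ge0 _] marg [[Aopt <-] _].
have mu_le_OPT : mu <= makespan t Aopt := mu_min _ _ (lp_feasible_indicator t Aopt).
rewrite /exp_makespan; under eq_bigr => A _ do rewrite makespan_truthful.
apply: le_trans (_ : _ <= n%:R * mu) _; last by rewrite ler_wpM2l ?ler0n.
apply: le_trans _ (lp_total_load_le feas); rewrite -(expected_total_load t marg).
by apply: ler_sum => A _; rewrite ler_wpM2l ?makespan_le_total_load.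
Qed.
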